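(* Fix $N\ge 1$, positive real weights $\omega_1,\dots,\omega_N$, a complex vector $\bm{\alpha}=(\alpha_1,\dots,\alpha_N)\in\mathbb{C}^N$, and an integer $n\ge 1$. Let $\rho_{\bm a}$ be a state (density operator) on the signal modes $\bm a$ such that the expectations $\operatorname{tr}(\rho_{\bm a}\,M)$ are well-defined and finite for every polynomial $M$ of degree at most $n$ in the operators $\hat a_k,\hat a_k^\dagger$ ($k=1,\dots,N$). Let the joint state of signal and LO modes be $\rho=\rho_{\bm a}\otimes \bm 0_{\bm b}$. Then, as $\delta\to 0^+$, $$\langle \hat q_\delta^{\,n}\rangle_\rho=\langle \hat q^{\,n}\rangle_\rho+O(\delta^2),$$ where the constant implicit in $O(\delta^2)$ depends on $\rho_{\bm a}$ (and on $n$, $\bm\alpha$, $\bm\omega$) but not on $\delta$.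
   Context: Modes: $\hat a_1,\dots,\hat a_N$ (signal modes $\bm a$) and $\hat b_1,\dots,\hat b_N$ (local-oscillator modes $\bm b$, taken before the LO displacement) are $2N$ mutually orthogonal bosonic modes: $[\hat a_k,\hat a_l^\dagger]=[\hat b_k,\hat b_l^\dagger]=\delta_{kl}$, all other commutators between annihilation/creation operators vanish. The joint Hilbert space is the tensor product of the Fock spaces of the signal modes and LO modes; $\bm 0_{\bm b}$ denotes the vacuum state (density operator) of all LO modes. The target quadrature is $\hat q=\hat q_{\bm a,\bm\alpha}=\sum_{k=1}^N -i(\alpha_k\hat a_k^\dagger-\alpha_k^*\hat a_k)$ (acting on the signal modes). For $\delta>0$, set $\beta_k=-i\alpha_k/\omega_k$ and define the outgoing modes $\hat c_k=\frac1{\sqrt2}(\hat a_k+\hat b_k+\beta_k/\delta)$, $\hat d_k=\frac1{\sqrt2}(\hat a_k-\hat b_k-\beta_k/\delta)$. The broadband pulsed (BBP) homodyne measurement operator is the self-adjoint operator $\hat q_\delta=\delta\sum_{k=1}^N\omega_k(\hat c_k^\dagger\hat c_k-\hat d_k^\dagger\hat d_k)$ (a scaled difference of two commuting weighted total-photon-number/energy operators), which equals $\hat q+\delta\sum_{k=1}^N\omega_k(\hat a_k^\dagger\hat b_k+\hat b_k^\dagger\hat a_k)$. Also $\hat q_0:=\hat q$. $\langle X\rangle_\rho=\operatorname{tr}(\rho X)$. *)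

(* Bosonic modes are modelled by the Fock (number)
   representation: operators act on finite linear combinations of number states
   (the standard invariant domain of polynomials in a, a^dagger). *)
From HB Require Import structures.
From mathcomp Require Import all_boot all_order all_algebra.
From mathcomp Require Import reals.
From mathcomp Require Import complex.
Set Implicit Arguments. Unset Strict Implicit. Unset Printing Implicit Defensive.
Import Order.TTheory GRing.Theory Num.Theory.
Local Open Scope ring_scope.
Local Open Scope complex_scope.

Section Fock.
Variable R : realType.
Local Notation C := R[i].

Section Ops.
Variable B : eqType.

(* a vector of the algebraic span of the basis: a formal finite sum sum_j c_j |x_j> *)
Definition vec := seq (C * B).
(* an (unbounded, densely defined) operator, given by its action on basis vectors *)
Definition op := B -> vec.

Definition vcoef (v : vec) (x : B) : C := \sum_(p <- v | p.2 == x) p.1.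
Definition melem (A : op) (x y : B) : C := vcoef (A y) x.

Definition applyo (A : op) (v : vec) : vec :=
  flatten [seq [seq (p.1 * q.1, q.2) | q <- A p.2] | p <- v].
Definition compo (A B' : op) : op := fun y => applyo A (B' y).
Definition addo (A B' : op) : op := fun y => A y ++ B' y.
Definition scaleo (c : C) (A : op) : op :=
  fun y => [seq (c * q.1, q.2) | q <- A y].
Definition subo (A B' : op) : op := addo A (scaleo (-1) B').
Definition ido : op := fun y => [:: (1, y)].
Definition zeroo : op := fun _ => [::].
Definition expo (A : op) (n : nat) : op := iter n (compo A) ido.

(* (rho A)(x,x) = sum_y rho(x,y) <y|A|x>, for a kernel rho given by its
   matrix elements rho x y = <x|rho|y> *)
Definition diag_term (rho : B -> B -> C) (A : op) (x : B) : C :=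
  \sum_(q <- A x) rho x q.2 * q.1.

Definition abs_summable (f : B -> C) : Prop :=
  exists Bd : C, forall s : seq B, uniq s -> \sum_(x <- s) `|f x| <= Bd.

Definition has_sum (f : B -> C) (S : C) : Prop :=
  forall eps : C, 0 < eps -> exists s0 : seq B,
    forall s : seq B, uniq s -> {subset s0 <= s} ->
      `|\sum_(x <- s) f x - S| < eps.

Definition density (rho : B -> B -> C) : Prop :=
  [/\ forall x y, rho y x = (rho x y)^*,
      forall v : vec, 0 <= \sum_(p <- v) \sum_(q <- v) (p.1)^* * q.1 * rho p.2 q.2
    & has_sum (fun x => rho x x) 1].

Definition expect_finite (rho : B -> B -> C) (A : op) : Prop :=
  abs_summable (diag_term rho A).
Definition expect_is (rho : B -> B -> C) (A : op) (e : C) : Prop :=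
  has_sum (diag_term rho A) e.
End Ops.

Variable N : nat.
Definition occ := {ffun 'I_N -> nat}.          (* occupation numbers *)
Definition vac : occ := [ffun => 0%N].

Definition decr (k : 'I_N) (m : occ) : occ := [ffun j => if j == k then (m j).-1 else m j].
Definition incr (k : 'I_N) (m : occ) : occ := [ffun j => if j == k then (m j).+1 else m j].

Definition ann (k : 'I_N) : op occ := fun m =>
  if m k is 0%N then [::] else [:: ((Num.sqrt (m k)%:R)%:C, decr k m)].
Definition cre (k : 'I_N) : op occ := fun m =>
  [:: ((Num.sqrt (m k).+1%:R)%:C, incr k m)].

Definition letter := ('I_N * bool)%type.
Definition letter_op (l : letter) : op occ := if l.2 then cre l.1 else ann l.1.
Definition word_op (w : seq letter) : op occ := foldr (fun l A => compo (letter_op l) A) (@ido _) w.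
Definition opoly := seq (C * seq letter).
Definition poly_op (P : opoly) : op occ :=
  foldr (fun t A => addo (scaleo t.1 (word_op t.2)) A) (@zeroo _) P.
Definition poly_deg_le (P : opoly) (n : nat) : bool := all (fun t => size t.2 <= n)%N P.

Definition joint := (occ * occ)%type.
Definition liftA (A : op occ) : op joint := fun x => [seq (q.1, (q.2, x.2)) | q <- A x.1].
Definition liftB (A : op occ) : op joint := fun x => [seq (q.1, (x.1, q.2)) | q <- A x.2].
Definition a_ (k : 'I_N) := liftA (ann k).
Definition ad_ (k : 'I_N) := liftA (cre k).
Definition b_ (k : 'I_N) := liftB (ann k).
Definition bd_ (k : 'I_N) := liftB (cre k).

Definition sumo (F : 'I_N -> op joint) : op joint := \big[@addo _/@zeroo _]_(k < N) F k.

Definition with_LO_vacuum (rho : occ -> occ -> C) : joint -> joint -> C :=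
  fun x y => rho x.1 y.1 * (x.2 == vac)%:R * (y.2 == vac)%:R.

Definition quad (alpha : 'I_N -> C) : op joint :=
  sumo (fun k => scaleo (- 'i) (subo (scaleo (alpha k) (ad_ k)) (scaleo (alpha k)^* (a_ k)))).

(* BBP homodyne operator, from the outgoing modes c_k, d_k *)
Definition beta (alpha : 'I_N -> C) (omega : 'I_N -> R) (k : 'I_N) : C :=
  - 'i * alpha k / (omega k)%:C.
Definition isq2 : C := ((Num.sqrt 2)^-1)%:C.
Definition c_ alpha omega (delta : R) (k : 'I_N) : op joint :=
  scaleo isq2 (addo (addo (a_ k) (b_ k)) (scaleo (beta alpha omega k / delta%:C) (@ido _))).
Definition cd_ alpha omega (delta : R) (k : 'I_N) : op joint :=
  scaleo isq2 (addo (addo (ad_ k) (bd_ k)) (scaleo ((beta alpha omega k)^* / delta%:C) (@ido _))).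
Definition d_ alpha omega (delta : R) (k : 'I_N) : op joint :=
  scaleo isq2 (subo (subo (a_ k) (b_ k)) (scaleo (beta alpha omega k / delta%:C) (@ido _))).
Definition dd_ alpha omega (delta : R) (k : 'I_N) : op joint :=
  scaleo isq2 (subo (subo (ad_ k) (bd_ k)) (scaleo ((beta alpha omega k)^* / delta%:C) (@ido _))).
Definition quad_delta alpha omega (delta : R) : op joint :=
  scaleo delta%:C (sumo (fun k => scaleo (omega k)%:C
     (subo (compo (cd_ alpha omega delta k) (c_ alpha omega delta k))
           (compo (dd_ alpha omega delta k) (d_ alpha omega delta k))))).
End Fock.

(* In the number basis the outgoing-mode operators are noncommutative polynomials
   in a, a^+, b, b^+, and the displacements beta/delta of c^+c and d^+d cancel, so
   that q_delta = q + delta sum_k omega_k (a_k^+ b_k + b_k^+ a_k) exactly.  Hence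
   <q_delta^n> = sum_j delta^j E_j, where E_j collects the words with j LO letters.
   With the LO in its vacuum E_0 = <q^n>, and E_1 = 0 because a single b_k or
   b_k^+ has no vacuum expectation.  Every word has signal degree n, so each E_j is
   finite by hypothesis, and |<q_delta^n> - <q^n>| <= delta^2 sum_j |E_j| for
   delta <= 1. *)

From HB Require Import structures.
From mathcomp Require Import all_boot all_order all_algebra.
From mathcomp Require Import reals.
From mathcomp Require Import complex.
From mathcomp Require Import classical_sets.
From mathcomp Require Import ring lra.
Set Implicit Arguments. Unset Strict Implicit. Unset Printing Implicit Defensive.
Import Order.TTheory GRing.Theory Num.Theory.
Local Open Scope ring_scope.
Local Open Scope complex_scope.
Local Notation Re := (@complex.Re _).
Local Notation Im := (@complex.Im _).

Section Pairing.
Variable R : realType.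
Local Notation C := R[i].

Section OneBasis.
Variable K : eqType.
Implicit Types (v : vec R K) (G : K -> C) (A B : op R K).

Definition vsum v G : C := \sum_(p <- v) p.1 * G p.2.

Lemma vcoefE v x : vcoef v x = vsum v (fun z => (z == x)%:R).
Proof.
rewrite /vcoef /vsum big_mkcond; apply: eq_bigr => p _.
by case: eqP => _; rewrite ?mulr1 ?mulr0.
Qed.

Lemma vsum_nil G : vsum [::] G = 0. Proof. by rewrite /vsum big_nil. Qed.
Lemma vsum_cons p v G : vsum (p :: v) G = p.1 * G p.2 + vsum v G.
Proof. by rewrite /vsum big_cons. Qed.
Lemma vsum_cat v v' G : vsum (v ++ v') G = vsum v G + vsum v' G.
Proof. by rewrite /vsum big_cat. Qed.
Lemma vsum_scale c v G : vsum [seq (c * q.1, q.2) | q <- v] G = c * vsum v G.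
Proof. by rewrite /vsum big_map big_distrr; apply: eq_bigr => q _ /=; rewrite mulrA. Qed.
Lemma vsumZ v G a : vsum v (fun z => a * G z) = a * vsum v G.
Proof. by rewrite /vsum big_distrr; apply: eq_bigr => q _ /=; rewrite mulrCA. Qed.
Lemma vsum0 v : vsum v (fun _ => 0) = 0.
Proof. by rewrite /vsum big1 // => q _; rewrite mulr0. Qed.
Lemma eq_vsum v G G' : G =1 G' -> vsum v G = vsum v G'.
Proof. by move=> e; apply: eq_bigr => q _; rewrite e. Qed.
Lemma eq_in_vsum v G G' : {in [seq p.2 | p <- v], G =1 G'} -> vsum v G = vsum v G'.
Proof.
move=> e; rewrite /vsum big_seq [RHS]big_seq; apply: eq_bigr => q qv.
by rewrite e // map_f.
Qed.

Lemma vsum_sum v m (F : 'I_m -> K -> C) :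
  vsum v (fun z => \sum_(j < m) F j z) = \sum_(j < m) vsum v (F j).
Proof. by rewrite /vsum; under eq_bigr do rewrite big_distrr; rewrite exchange_big. Qed.

Lemma vsum_compo A B y G : vsum (compo A B y) G = vsum (B y) (fun z => vsum (A z) G).
Proof.
rewrite /vsum /compo /applyo big_flatten big_map; apply: eq_bigr => p _ /=.
by have := vsum_scale p.1 (A p.2) G; rewrite /vsum.
Qed.
Lemma vsum_addo A B y G : vsum (addo A B y) G = vsum (A y) G + vsum (B y) G.
Proof. exact: vsum_cat. Qed.
Lemma vsum_scaleo c A y G : vsum (scaleo c A y) G = c * vsum (A y) G.
Proof. exact: vsum_scale. Qed.
Lemma vsum_ido y G : vsum (@ido R K y) G = G y.
Proof. by rewrite vsum_cons vsum_nil addr0 mul1r. Qed.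
Lemma vsum_zeroo y G : vsum (@zeroo R K y) G = 0.
Proof. exact: vsum_nil. Qed.

(* Equality of all matrix elements: take for G an indicator, see vcoefE. *)
Definition eqo A B := forall y G, vsum (A y) G = vsum (B y) G.

Lemma eqo_trans A B D : eqo A B -> eqo B D -> eqo A D.
Proof. by move=> e1 e2 y G; rewrite e1 e2. Qed.

Lemma eqo_compo A A' B B' : eqo A A' -> eqo B B' -> eqo (compo A B) (compo A' B').
Proof. by move=> eA eB y G; rewrite !vsum_compo eB; apply: eq_vsum => z; apply: eA. Qed.

Lemma diag_termE (rho : K -> K -> C) A x : diag_term rho A x = vsum (A x) (rho x).
Proof. by apply: eq_bigr => q _; rewrite mulrC. Qed.

Lemma eq_diag_term rho A B : eqo A B -> diag_term rho A =1 diag_term rho B.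
Proof. by move=> e x; rewrite !diag_termE. Qed.

End OneBasis.

Lemma vsum_exchange (K1 K2 : eqType) (v : vec R K1) (u : vec R K2) (H : K1 -> K2 -> C) :
  vsum v (fun z => vsum u (H z)) = vsum u (fun w => vsum v (fun z => H z w)).
Proof.
rewrite /vsum; under eq_bigr do rewrite big_distrr.
rewrite exchange_big; apply: eq_bigr => q _ /=; rewrite big_distrr.
by apply: eq_bigr => p _ /=; rewrite !mulrA [q.1 * _]mulrC.
Qed.

End Pairing.

Section JointPolynomials.
Variable R : realType.
Local Notation C := R[i].
Variable N : nat.

Definition jletter := (letter N * bool)%type.
Definition jletter_op (l : jletter) : op R (joint N) :=
  if l.2 then liftB (letter_op R l.1) else liftA (letter_op R l.1).
Definition jword_op (w : seq jletter) : op R (joint N) :=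
  foldr (fun l A => compo (jletter_op l) A) (@ido R _) w.
Definition jpoly := vec R (seq jletter).
Definition jpoly_op (P : jpoly) : op R (joint N) :=
  foldr (fun t A => addo (scaleo t.1 (jword_op t.2)) A) (@zeroo R _) P.

Definition pone : jpoly := [:: (1, [::])].
Definition pletter (l : jletter) : jpoly := [:: (1, [:: l])].
Definition pmul (P Q : jpoly) : jpoly := [seq (t.1 * s.1, t.2 ++ s.2) | t <- P, s <- Q].
Definition pscale c (P : jpoly) : jpoly := [seq (c * t.1, t.2) | t <- P].
Definition ppow (P : jpoly) n := iter n (pmul P) pone.

Implicit Types (P Q : jpoly) (X Y : op R (joint N)).

Lemma vsum_jpoly_op P y G : vsum (jpoly_op P y) G = vsum P (fun w => vsum (jword_op w y) G).
Proof.
elim: P => [|t P IH]; first by rewrite vsum_nil vsum_zeroo.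
by rewrite vsum_cons /= vsum_addo vsum_scaleo IH.
Qed.

Lemma vsum_jword_cat w1 w2 y G :
  vsum (jword_op (w1 ++ w2) y) G = vsum (jword_op w2 y) (fun z => vsum (jword_op w1 z) G).
Proof.
elim: w1 G => [|l w1 IH] G /=; first by apply: eq_vsum => z; rewrite vsum_ido.
by rewrite vsum_compo IH; apply: eq_vsum => z; rewrite vsum_compo.
Qed.

Lemma vsum_pmul P Q (G : seq jletter -> C) :
  vsum (pmul P Q) G = vsum P (fun t => vsum Q (fun s => G (t ++ s))).
Proof.
rewrite /vsum /pmul big_allpairs_dep; apply: eq_bigr => t _ /=.
by rewrite big_distrr; apply: eq_bigr => s _ /=; rewrite mulrA.
Qed.

Lemma vsum_pone (G : seq jletter -> C) : vsum pone G = G [::].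
Proof. by rewrite vsum_cons vsum_nil addr0 mul1r. Qed.

Lemma eqo_jpoly P Q : (forall G, vsum P G = vsum Q G) -> eqo (jpoly_op P) (jpoly_op Q).
Proof. by move=> e y G; rewrite !vsum_jpoly_op e. Qed.

Lemma eqo_pone : eqo (@ido R _) (jpoly_op pone).
Proof. by move=> y G; rewrite vsum_ido vsum_jpoly_op vsum_pone /= vsum_ido. Qed.

Lemma eqo_pletter l : eqo (jletter_op l) (jpoly_op (pletter l)).
Proof.
move=> y G; rewrite vsum_jpoly_op vsum_cons vsum_nil addr0 mul1r /=.
by rewrite vsum_compo vsum_ido.
Qed.

Lemma eqo_cat X Y P Q : eqo X (jpoly_op P) -> eqo Y (jpoly_op Q) ->
  eqo (addo X Y) (jpoly_op (P ++ Q)).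
Proof. by move=> eX eY y G; rewrite vsum_addo eX eY !vsum_jpoly_op vsum_cat. Qed.

Lemma eqo_pscale c X P : eqo X (jpoly_op P) -> eqo (scaleo c X) (jpoly_op (pscale c P)).
Proof. by move=> eX y G; rewrite vsum_scaleo eX !vsum_jpoly_op vsum_scale. Qed.

Lemma eqo_pmul X Y P Q : eqo X (jpoly_op P) -> eqo Y (jpoly_op Q) ->
  eqo (compo X Y) (jpoly_op (pmul P Q)).
Proof.
move=> eX eY; apply: eqo_trans (eqo_compo eX eY) _ => y G.
rewrite vsum_compo !vsum_jpoly_op vsum_pmul.
transitivity (vsum P (fun t => vsum Q (fun s =>
                vsum (jword_op s y) (fun z => vsum (jword_op t z) G)))).
  rewrite vsum_exchange; apply: eq_vsum => s.
  by under eq_vsum do rewrite vsum_jpoly_op; rewrite vsum_exchange.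
by apply: eq_vsum => t; apply: eq_vsum => s; rewrite vsum_jword_cat.
Qed.

Lemma eqo_ppow X P n : eqo X (jpoly_op P) -> eqo (expo X n) (jpoly_op (ppow P n)).
Proof. by move=> e; elim: n => [|n IH] /=; [exact: eqo_pone | exact: eqo_pmul]. Qed.

Lemma eqo_sumo (F : 'I_N -> op R (joint N)) (P : 'I_N -> jpoly) :
  (forall k, eqo (F k) (jpoly_op (P k))) ->
  eqo (sumo F) (jpoly_op (\big[cat/[::]]_(k < N) P k)).
Proof.
move=> e; apply: (big_rec2 (fun X P => eqo X (jpoly_op P))) => [y G|k X Q _ eXQ].
  by rewrite vsum_jpoly_op /= !vsum_nil.
exact: eqo_cat.
Qed.

Lemma vsum_bigcat (P : 'I_N -> jpoly) G :
  vsum (\big[cat/[::]]_(k < N) P k) G = \sum_(k < N) vsum (P k) G.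
Proof. exact: (big_morph (fun P => vsum P G) (fun P Q => vsum_cat P Q G) (vsum_nil G)). Qed.

Definition sig_word (w : seq jletter) := [seq l.1 | l <- w & ~~ l.2].
Definition lo_word (w : seq jletter) := [seq l.1 | l <- w & l.2].

Lemma sig_word_cat u v : sig_word (u ++ v) = sig_word u ++ sig_word v.
Proof. by rewrite /sig_word filter_cat map_cat. Qed.
Lemma lo_word_cat u v : lo_word (u ++ v) = lo_word u ++ lo_word v.
Proof. by rewrite /lo_word filter_cat map_cat. Qed.

Definition vprod (u v : vec R (occ N)) : vec R (joint N) :=
  [seq (p.1 * q.1, (p.2, q.2)) | p <- u, q <- v].

Lemma vsum_vprod u v G : vsum (vprod u v) G = vsum u (fun a => vsum v (fun b => G (a, b))).
Proof.
rewrite /vsum /vprod big_allpairs_dep; apply: eq_bigr => t _ /=.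
by rewrite big_distrr; apply: eq_bigr => s _ /=; rewrite mulrA.
Qed.

Lemma vsum_liftA (A : op R (occ N)) y G :
  vsum (liftA A y) G = vsum (A y.1) (fun a => G (a, y.2)).
Proof. by rewrite /vsum /liftA big_map. Qed.
Lemma vsum_liftB (A : op R (occ N)) y G :
  vsum (liftB A y) G = vsum (A y.2) (fun b => G (y.1, b)).
Proof. by rewrite /vsum /liftB big_map. Qed.

(* Letters on the signal and on the LO modes commute, so a word factors. *)
Lemma vsum_jword_op w y G :
  vsum (jword_op w y) G = vsum (vprod (word_op R (sig_word w) y.1) (word_op R (lo_word w) y.2)) G.
Proof.
elim: w y G => [|[l []] w IH] [a b] G /=.
- by rewrite vsum_ido vsum_vprod /= !vsum_ido.
- rewrite vsum_compo IH !vsum_vprod /lo_word /= -/(lo_word w).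
  apply: eq_vsum => a'; rewrite vsum_compo; apply: eq_vsum => b'.
  by rewrite /jletter_op /= vsum_liftB.
- rewrite vsum_compo IH !vsum_vprod /sig_word /= -/(sig_word w) vsum_compo.
  apply: eq_vsum => a'; rewrite /jletter_op /= [RHS]vsum_exchange.
  by apply: eq_vsum => b'; rewrite vsum_liftA.
Qed.

End JointPolynomials.

Section Summation.
Variable R : realType.
Local Notation C := R[i].
Variable K : eqType.
Implicit Types (f g : K -> C) (h : K -> R).

Lemma has_sum_ext f g S : f =1 g -> has_sum f S -> has_sum g S.
Proof.
move=> e hf eps /hf [s0 hs0]; exists s0 => s us ss.
by under eq_bigr do rewrite -e; apply: hs0.
Qed.

Lemma has_sum0 : has_sum (fun _ : K => (0 : C)) 0.
Proof. by move=> eps e0; exists [::] => s _ _; rewrite big1 // subrr normr0. Qed.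

Lemma has_sumD f g S T : has_sum f S -> has_sum g T -> has_sum (fun x => f x + g x) (S + T).
Proof.
move=> hf hg eps e0.
have e2 : 0 < eps / 2%:R by rewrite divr_gt0 // ltr0n.
have [s1 h1] := hf _ e2; have [s2 h2] := hg _ e2.
exists (s1 ++ s2) => s us ss.
have ss1 : {subset s1 <= s} by move=> x xs; apply: ss; rewrite mem_cat xs.
have ss2 : {subset s2 <= s} by move=> x xs; apply: ss; rewrite mem_cat xs orbT.
rewrite big_split /= (_ : _ - _ = (\sum_(x <- s) f x - S) + (\sum_(x <- s) g x - T)); last by ring.
apply: le_lt_trans (ler_normD _ _) _; rewrite [eps]splitr.
by apply: ltrD; [apply: h1 | apply: h2].
Qed.

Lemma has_sumZ f S c : has_sum f S -> has_sum (fun x => c * f x) (c * S).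
Proof.
move=> hf eps e0; have [->|nc] := eqVneq c 0.
  by exists [::] => s _ _; rewrite big1 ?mul0r ?subrr ?normr0 // => x _; rewrite mul0r.
have cp : 0 < `|c| by rewrite normr_gt0.
have [s0 h0] := hf (eps / `|c|) (divr_gt0 e0 cp).
exists s0 => s us ss; rewrite -big_distrr /= -mulrBr normrM.
by have := h0 s us ss; rewrite ltr_pdivlMr // mulrC.
Qed.

Lemma abs_summable_ext f g : f =1 g -> abs_summable f -> abs_summable g.
Proof. by move=> e [Bd hB]; exists Bd => s us; under eq_bigr do rewrite -e; apply: hB. Qed.

Definition partial_sums h : set R := fun x => exists2 s, uniq s & x = \sum_(y <- s) h y.

Lemma le_sum_subseq h s0 s : (forall x, 0 <= h x) -> uniq s0 -> uniq s ->
  {subset s0 <= s} -> \sum_(x <- s0) h x <= \sum_(x <- s) h x.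
Proof.
move=> h0 u0 u ss; rewrite [X in _ <= X](bigID (mem s0)) /=.
have -> : \sum_(x <- s | x \in s0) h x = \sum_(x <- s0) h x.
  rewrite -big_filter; apply: perm_big; apply: uniq_perm; rewrite ?filter_uniq //.
  by move=> x; rewrite mem_filter; case: (boolP (x \in s0)) => // /ss ->.
by rewrite lerDl sumr_ge0.
Qed.

Lemma has_sum_sup h M : (forall x, 0 <= h x) ->
  (forall s, uniq s -> \sum_(y <- s) h y <= M) ->
  has_sum (fun x => (h x)%:C) (sup (partial_sums h))%:C.
Proof.
move=> h0 hM.
have hs : has_sup (partial_sums h).
  split; first by exists 0, [::]; rewrite ?big_nil.
  by exists M => y [s us ->]; apply: hM.
move=> [a b]; rewrite ltcE /= => /andP [/eqP -> a0].
have [e [s0 u0 ->] he] := sup_adherent a0 hs.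
exists s0 => s us ss.
have le1 : \sum_(y <- s) h y <= sup (partial_sums h) by apply: sup_upper_bound => //; exists s.
have le2 := le_sum_subseq h0 u0 us ss.
rewrite -raddf_sum /= -raddfB ler0_norm; last by rewrite lecR subr_le0.
by rewrite -raddfN ltcR /=; lra.
Qed.

Definition pos_part (r : R) := (r + `|r|) / 2%:R.

Lemma pos_part_bound r : 0 <= pos_part r <= `|r|.
Proof.
have := ler_norm r; have := ler_norm (- r); rewrite normrN /pos_part => *.
by apply/andP; split; lra.
Qed.

Lemma pos_partB r : pos_part r - pos_part (- r) = r.
Proof. by rewrite /pos_part normrN; field. Qed.

Definition real_sum h : R :=
  sup (partial_sums (pos_part \o h)) - sup (partial_sums (pos_part \o -%R \o h)).

Lemma has_sum_real h M : (forall s, uniq s -> \sum_(x <- s) `|h x| <= M) ->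
  has_sum (fun x => (h x)%:C) (real_sum h)%:C.
Proof.
move=> hM.
have pos (g : K -> R) : (forall x, `|g x| = `|h x|) ->
    has_sum (fun x => (pos_part (g x))%:C) (sup (partial_sums (pos_part \o g)))%:C.
  move=> eg; apply: (@has_sum_sup _ M) => [x|s us]; first by case/andP: (pos_part_bound (g x)).
  apply: le_trans (hM s us); apply: ler_sum => x _; rewrite -eg.
  by case/andP: (pos_part_bound (g x)).
have := has_sumD (pos h (fun x => erefl)) (has_sumZ (-1) (pos (-%R \o h) (fun x => normrN _))).
rewrite mulN1r -raddfB.

by apply: has_sum_ext => x /=; rewrite mulN1r -raddfB pos_partB.
Qed.

Definition abs_sum f : C := (real_sum (Re \o f))%:C + 'i * (real_sum (Im \o f))%:C.

Lemma abs_summable_bound f (h : K -> R) : abs_summable f ->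
  (forall x, `|h x|%:C <= `|f x|) ->
  exists M, forall s, uniq s -> \sum_(x <- s) `|h x| <= M.
Proof.
move=> [Bd hB] hf; exists (Re Bd) => s us.
have : (\sum_(x <- s) `|h x|)%:C <= Bd.
  by rewrite raddf_sum; apply: le_trans (hB s us); apply: ler_sum => x _; exact: hf.
by rewrite lecE /= => /andP [].
Qed.

Lemma abs_summable_has_sum f : abs_summable f -> has_sum f (abs_sum f).
Proof.
move=> hf.
have [MR hR] := abs_summable_bound (h := Re \o f) hf (fun x => normc_ge_Re (f x)).
have normIm x : `|Im (f x)|%:C <= `|f x|.
  by have := normc_ge_Re (f x * 'i); rewrite ReiNIm normrN normrM normCi mulr1.
have [MI hI] := abs_summable_bound (h := Im \o f) hf normIm.
have := has_sumD (has_sum_real hR) (has_sumZ 'i (has_sum_real hI)).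
by apply: has_sum_ext => x /=; rewrite [RHS]complexE.
Qed.

End Summation.

Lemma has_sum_vacuum_slice (R : realType) (K1 K2 : eqType) (v0 : K2) (g : K1 -> R[i]) S :
  has_sum g S -> has_sum (fun x : K1 * K2 => (x.2 == v0)%:R * g x.1) S.
Proof.
move=> hg eps e0; have [s0 h0] := hg eps e0.
exists [seq (a, v0) | a <- s0] => s us ss.
have -> : \sum_(x <- s) (x.2 == v0)%:R * g x.1 = \sum_(a <- [seq x.1 | x <- s & x.2 == v0]) g a.
  rewrite big_map big_filter [RHS]big_mkcond; apply: eq_bigr => x _.
  by case: (x.2 == v0); rewrite ?mul1r ?mul0r.
apply: h0.
  rewrite map_inj_in_uniq ?filter_uniq // => -[a b] [c d].
  by rewrite !mem_filter => /andP [/eqP /= -> _] /andP [/eqP /= -> _] /= ->.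
move=> a a0; apply/mapP; exists (a, v0) => //.
by rewrite mem_filter eqxx /=; apply: ss; apply: map_f.
Qed.

Section PowerExpansion.
Variable R : realType.
Local Notation C := R[i].
Variable N : nat.
Local Notation jpoly := (jpoly R N).
Implicit Types (P Q : jpoly) (u v : seq (jletter N)).

Lemma pmul0 P : pmul P [::] = [::].
Proof. by elim: P. Qed.

Lemma all_pmul (p1 p2 p3 : pred (seq (jletter N))) P Q :
  all (fun t => p1 t.2) P -> all (fun t => p2 t.2) Q ->
  (forall u v, p1 u -> p2 v -> p3 (u ++ v)) -> all (fun t => p3 t.2) (pmul P Q).
Proof.
move=> /allP hP /allP hQ h; apply/allP => x /allpairsP [[t s] [tP sQ ->]] /=.
exact: h (hP _ tP) (hQ _ sQ).
Qed.

Definition bideg (a b : nat) : pred (seq (jletter N)) :=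
  fun u => (size (sig_word u) == a) && (size (lo_word u) == b).

Lemma bideg_cat a b a' b' u v : bideg a b u -> bideg a' b' v -> bideg (a + a') (b + b') (u ++ v).
Proof.
move=> /andP [/eqP a1 /eqP b1] /andP [/eqP a2 /eqP b2].
by rewrite /bideg sig_word_cat lo_word_cat !size_cat a1 b1 a2 b2 !eqxx.
Qed.

Lemma bideg_pmul a b a' b' P Q : all (fun t => bideg a b t.2) P ->
  all (fun t => bideg a' b' t.2) Q -> all (fun t => bideg (a + a') (b + b') t.2) (pmul P Q).
Proof. by move=> hP hQ; apply: (all_pmul hP hQ) => u v; apply: bideg_cat. Qed.

Lemma sig_size_ppow P n : all (fun t => size (sig_word t.2) == 1%N) P ->
  all (fun t => size (sig_word t.2) == n) (ppow P n).
Proof.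
move=> hP; elim: n => [|n IH] //=.
have sig_size_cat u v :
    size (sig_word u) == 1%N -> size (sig_word v) == n -> size (sig_word (u ++ v)) == n.+1.
  by move=> /eqP a1 /eqP a2; rewrite sig_word_cat size_cat a1 a2.
exact: (@all_pmul (fun u => size (sig_word u) == 1%N) (fun u => size (sig_word u) == n)
  (fun u => size (sig_word u) == n.+1) _ _ hP IH sig_size_cat).
Qed.

Variables A B : jpoly.

(* The coefficient of d^j in (A + d B)^n: the products with j factors from B. *)
Fixpoint mixed_pow n j : jpoly :=
  match n with
  | 0 => if j is 0 then pone R N else [::]
  | n'.+1 => pmul A (mixed_pow n' j) ++ (if j is j'.+1 then pmul B (mixed_pow n' j') else [::])
  end.

Lemma mixed_pow_gt n j : (n < j)%N -> mixed_pow n j = [::].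
Proof. by elim: n j => [|n IH] [|j] //= lt; rewrite !IH ?pmul0 // ltnW. Qed.

Lemma vsum_ppow_catZ (d : C) n G :
  vsum (ppow (A ++ pscale d B) n) G = \sum_(j < n.+1) d ^+ j * vsum (mixed_pow n j) G.
Proof.
elim: n G => [|n IH] G /=; first by rewrite big_ord_recl big_ord0 addr0 expr0 mul1r.
have vsum_pmulZ (X : jpoly) j :
    vsum X (fun z => d ^+ j * vsum (mixed_pow n j) (fun s => G (z ++ s))) =
    d ^+ j * vsum (pmul X (mixed_pow n j)) G.
  by rewrite vsum_pmul -vsumZ.
rewrite vsum_pmul; under eq_vsum do rewrite IH.
rewrite vsum_cat vsum_scale !vsum_sum.
rewrite (eq_bigr _ (fun (j : 'I_n.+1) _ => vsum_pmulZ A j)).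
rewrite (eq_bigr _ (fun (j : 'I_n.+1) _ => vsum_pmulZ B j)).
rewrite big_distrr /=.
rewrite [RHS](eq_bigr (fun j : 'I_n.+2 => d ^+ j * vsum (pmul A (mixed_pow n j)) G +
   d ^+ j * (if nat_of_ord j is j'.+1 then vsum (pmul B (mixed_pow n j')) G else 0))); last first.
  by move=> [[|j] jl] _ /=; rewrite vsum_cat -mulrDr // vsum_nil.
rewrite big_split /= [X in _ = X + _]big_ord_recr /= mixed_pow_gt // pmul0 vsum_nil mulr0 addr0.
rewrite [X in _ = _ + X]big_ord_recl /= mulr0 add0r; congr (_ + _); apply: eq_bigr => j _.
by rewrite mulrA -exprS.
Qed.

Hypothesis bideg_A : all (fun t => bideg 1 0 t.2) A.
Hypothesis bideg_B : all (fun t => bideg 1 1 t.2) B.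

Lemma bideg_mixed_pow n j : all (fun t => bideg n j t.2) (mixed_pow n j).
Proof.
elim: n j => [|n IH] [|j] //=; first by rewrite cats0; exact: bideg_pmul bideg_A (IH 0%N).
by rewrite all_cat (bideg_pmul bideg_A (IH j.+1)) (bideg_pmul bideg_B (IH j)).
Qed.

End PowerExpansion.

Section Quadratures.
Variable R : realType.
Local Notation C := R[i].
Variable N : nat.
Variable omega : 'I_N -> R.
Variable alpha : 'I_N -> C.
Local Notation jpoly := (jpoly R N).
Local Notation pletter := (@pletter R N).

Definition pa k := pletter (k, false, false).
Definition pad k := pletter (k, true, false).
Definition pb k := pletter (k, false, true).
Definition pbd k := pletter (k, true, true).

Lemma eqo_pa k : eqo (a_ R k) (jpoly_op (pa k)). Proof. exact: (eqo_pletter (k, false, false)). Qed.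
Lemma eqo_pad k : eqo (ad_ R k) (jpoly_op (pad k)). Proof. exact: (eqo_pletter (k, true, false)). Qed.
Lemma eqo_pb k : eqo (b_ R k) (jpoly_op (pb k)). Proof. exact: (eqo_pletter (k, false, true)). Qed.
Lemma eqo_pbd k : eqo (bd_ R k) (jpoly_op (pbd k)). Proof. exact: (eqo_pletter (k, true, true)). Qed.

Definition quad_poly : jpoly := \big[cat/[::]]_(k < N)
  pscale (- 'i) (pscale (alpha k) (pad k) ++ pscale (-1) (pscale (conjc (alpha k)) (pa k))).
Definition mix_poly : jpoly := \big[cat/[::]]_(k < N)
  pscale (omega k)%:C (pmul (pad k) (pb k) ++ pmul (pbd k) (pa k)).
Definition homodyne_poly (d : C) : jpoly := quad_poly ++ pscale d mix_poly.

Lemma eqo_quad_poly : eqo (quad alpha) (jpoly_op quad_poly).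
Proof.
apply: eqo_sumo => k; apply: eqo_pscale; apply: eqo_cat; apply: eqo_pscale.
  exact: eqo_pad.
by apply: eqo_pscale; apply: eqo_pa.
Qed.

Section FixedDelta.
Variable delta : R.
Local Notation bt k := (beta alpha omega k / delta%:C).
Local Notation btc k := (conjc (beta alpha omega k) / delta%:C).

Definition c_poly k := pscale (isq2 R) ((pa k ++ pb k) ++ pscale (bt k) (pone R N)).
Definition cd_poly k := pscale (isq2 R) ((pad k ++ pbd k) ++ pscale (btc k) (pone R N)).
Definition d_poly k :=
  pscale (isq2 R) ((pa k ++ pscale (-1) (pb k)) ++ pscale (-1) (pscale (bt k) (pone R N))).
Definition dd_poly k :=
  pscale (isq2 R) ((pad k ++ pscale (-1) (pbd k)) ++ pscale (-1) (pscale (btc k) (pone R N))).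
Definition quad_delta_poly : jpoly := pscale delta%:C (\big[cat/[::]]_(k < N)
  pscale (omega k)%:C (pmul (cd_poly k) (c_poly k) ++ pscale (-1) (pmul (dd_poly k) (d_poly k)))).

Lemma eqo_quad_delta_poly : eqo (quad_delta alpha omega delta) (jpoly_op quad_delta_poly).
Proof.
have eqo_c (X Y : op R (joint N)) P Q c : eqo X (jpoly_op P) -> eqo Y (jpoly_op Q) ->
    eqo (addo (addo X Y) (scaleo c (@ido R _))) (jpoly_op ((P ++ Q) ++ pscale c (pone R N))).
  by move=> eX eY; apply: eqo_cat; [apply: eqo_cat | apply: eqo_pscale; apply: eqo_pone].
have eqo_d (X Y : op R (joint N)) P Q c : eqo X (jpoly_op P) -> eqo Y (jpoly_op Q) ->
    eqo (subo (subo X Y) (scaleo c (@ido R _)))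
      (jpoly_op ((P ++ pscale (-1) Q) ++ pscale (-1) (pscale c (pone R N)))).
  move=> eX eY; apply: eqo_cat; first by apply: eqo_cat => //; apply: eqo_pscale.
  by do 2!apply: eqo_pscale; apply: eqo_pone.
apply: eqo_pscale; apply: eqo_sumo => k; apply: eqo_pscale; apply: eqo_cat.
  by apply: eqo_pmul; apply: eqo_pscale; apply: eqo_c; apply: eqo_pa || apply: eqo_pad || apply: eqo_pb || apply: eqo_pbd.
by apply: eqo_pscale; apply: eqo_pmul; apply: eqo_pscale; apply: eqo_d;
  apply: eqo_pa || apply: eqo_pad || apply: eqo_pb || apply: eqo_pbd.
Qed.

Lemma vsum_pmul_pscale c d (P Q : jpoly) G :
  vsum (pmul (pscale c P) (pscale d Q)) G = c * d * vsum (pmul P Q) G.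
Proof.
rewrite !vsum_pmul vsum_scale -mulrA; congr (_ * _); rewrite -vsumZ.
by apply: eq_vsum => t; rewrite vsum_scale.
Qed.

Lemma isq2_sqr : isq2 R * isq2 R = 2^-1.
Proof.
rewrite /isq2 -rmorphM /= -invfM -expr2 sqr_sqrtr ?ler0n //.
by rewrite fmorphV /= rmorph_nat.
Qed.

Lemma conj_beta k : conjc (beta alpha omega k) = 'i * conjc (alpha k) / (omega k)%:C.
Proof.
have conj_i : conjc 'i = - 'i :> C by rewrite -complexiE /conjc /=; congr Complex; rewrite oppr0.
have conjM (x y : C) : conjc (x * y) = conjc x * conjc y by exact: rmorphM.
have conjN (x : C) : conjc (- x) = - conjc x by exact: rmorphN.
by rewrite /beta !conjM conjN conjc_inv conjc_real conj_i opprK.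
Qed.

(* The 1/delta^2 terms of c^+c and d^+d cancel and the 1/delta ones add up to q. *)
Lemma vsum_quad_delta_poly G : delta != 0 -> (forall k, omega k != 0) ->
  vsum quad_delta_poly G = vsum (homodyne_poly delta%:C) G.
Proof.
move=> d0 w0.
rewrite /quad_delta_poly vsum_scale vsum_cat vsum_scale /quad_poly /mix_poly !vsum_bigcat.
rewrite !big_distrr -big_split; apply: eq_bigr => k _.
rewrite vsum_scale vsum_cat vsum_scale !vsum_pmul_pscale isq2_sqr conj_beta.
rewrite /pa /pb /pad /pbd /pletter /pone /= /beta !vsum_cons !vsum_nil /=.
have dC : delta%:C != 0 by rewrite fmorph_eq0.
have wC : (omega k)%:C != 0 by rewrite fmorph_eq0.
move: (G _) (G _) (G _) (G _) (G _) (G _) (G _) (G _) (G _) => g1 g2 g3 g4 g5 g6 g7 g8 g9.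
by move: (alpha k) (conjc (alpha k)) => a ac; field; rewrite dC wC.
Qed.

End FixedDelta.

Lemma eqo_quad_delta delta : 0 < delta -> (forall k, 0 < omega k) ->
  eqo (quad_delta alpha omega delta) (jpoly_op (homodyne_poly delta%:C)).
Proof.
move=> d0 w0; apply: eqo_trans (eqo_quad_delta_poly delta) _.
by apply: eqo_jpoly => G; apply: vsum_quad_delta_poly => [|k]; rewrite gt_eqF.
Qed.

Lemma eqo_quad : eqo (quad alpha) (jpoly_op (homodyne_poly 0)).
Proof.
apply: eqo_trans eqo_quad_poly _; apply: eqo_jpoly => G.
by rewrite vsum_cat vsum_scale mul0r addr0.
Qed.

End Quadratures.

Section VacuumExpectation.
Variable R : realType.
Local Notation C := R[i].
Variable N : nat.
Variable rho : occ N -> occ N -> C.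
Local Notation rhoJ := (with_LO_vacuum rho).

Definition lo_vacuum_elem (w : seq (jletter N)) : C :=
  vcoef (word_op R (lo_word w) (vac N)) (vac N).

Lemma diag_term_jword w x : diag_term rhoJ (jword_op R w) x =
  (x.2 == vac N)%:R * lo_vacuum_elem w * diag_term rho (word_op R (sig_word w)) x.1.
Proof.
case: x => m m'; rewrite !diag_termE vsum_jword_op vsum_vprod /=.
have [->|ne] := eqVneq m' (vac N).
  rewrite mul1r /lo_vacuum_elem vcoefE -vsumZ; apply: eq_vsum => a.
  rewrite mulrC -vsumZ; apply: eq_vsum => b.
  by rewrite /with_LO_vacuum /= eqxx mulr1.
rewrite !mul0r -[RHS](vsum0 (word_op R (sig_word w) m)); apply: eq_vsum => a.
rewrite -[RHS](vsum0 (word_op R (lo_word w) m')); apply: eq_vsum => b.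
by rewrite /with_LO_vacuum /= (negbTE ne) mulr0 mul0r.
Qed.

Lemma lo_vacuum_elem_letter w : size (lo_word w) = 1%N -> lo_vacuum_elem w = 0.
Proof.
rewrite /lo_vacuum_elem; case: (lo_word w) => [|[k []] [|]] //= _.
  rewrite vcoefE vsum_compo vsum_ido vsum_cons vsum_nil addr0 /=.
  suff /negbTE -> : incr k (vac N) != vac N by rewrite mulr0.
  by apply/eqP => /(congr1 (fun m : occ N => m k)); rewrite !ffunE eqxx.
by rewrite vcoefE vsum_compo vsum_ido /letter_op /= /ann /vac ffunE vsum_nil.
Qed.

Variable n : nat.
Hypothesis rho_finite : forall P : opoly R N, poly_deg_le P n -> expect_finite rho (poly_op P).

Definition word_expect (w : seq (jletter N)) : C :=
  lo_vacuum_elem w * abs_sum (diag_term rho (word_op R (sig_word w))).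

Lemma abs_summable_word (u : seq (letter N)) : (size u <= n)%N ->
  abs_summable (diag_term rho (word_op R u)).
Proof.
move=> su; have := @rho_finite [:: (1, u)]; rewrite /poly_deg_le /= su => /(_ isT).
apply: abs_summable_ext => x; rewrite !diag_termE /=.
by rewrite vsum_addo vsum_scaleo vsum_zeroo addr0 mul1r.
Qed.

Lemma expect_jpoly P : all (fun t => size (sig_word t.2) <= n)%N P ->
  expect_is rhoJ (jpoly_op P) (vsum P word_expect).
Proof.
rewrite /expect_is; elim: P => [_|t P IH /andP [ht hP]].
  by rewrite vsum_nil; apply: (has_sum_ext _ (@has_sum0 _ _)) => x; rewrite diag_termE vsum_jpoly_op !vsum_nil.
have ht' := has_sum_vacuum_slice (vac N)
  (has_sumZ (lo_vacuum_elem t.2) (abs_summable_has_sum (abs_summable_word ht))).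
rewrite vsum_cons; apply: (has_sum_ext _ (has_sumD (has_sumZ t.1 ht') (IH hP))) => x /=.
by rewrite !diag_termE /= vsum_addo vsum_scaleo -!diag_termE diag_term_jword !mulrA.
Qed.

End VacuumExpectation.

Lemma norm_power_sum_sub0_le (F : numFieldType) (d : F) (E : nat -> F) n :
  0 <= d <= 1 -> E 1%N = 0 ->
  `|\sum_(j < n.+1) d ^+ j * E j - \sum_(j < n.+1) 0 ^+ j * E j| <=
    d ^+ 2 * \sum_(j < n.+1) `|E j|.
Proof.
move=> /andP [d0 d1] E1.
have -> : \sum_(j < n.+1) 0 ^+ j * E j = E 0%N.
  by rewrite big_ord_recl expr0 mul1r big1 ?addr0 // => i _; rewrite lift0 expr0n mul0r.
rewrite big_ord_recl expr0 mul1r addrC addKr.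
apply: le_trans (ler_norm_sum _ _ _) _.
rewrite [X in _ <= _ * X]big_ord_recl mulrDr big_distrr /= -[X in X <= _]add0r.
apply: lerD; first by rewrite mulr_ge0 ?exprn_ge0.
apply: ler_sum => i _; rewrite /bump leq0n add1n normrM normrX ger0_norm //.
case: i => -[|i] lt_i /=; first by rewrite E1 normr0 !mulr0.
rewrite ler_wpM2r // -addn2 exprD ler_piMl ?exprn_ge0 ?exprn_ile1 //.
Qed.

Theorem theorem1 (R : realType) (N : nat) (omega : 'I_N -> R) (alpha : 'I_N -> R[i])
    (n : nat) (rho_a : occ N -> occ N -> R[i]) :
  (0 < N)%N -> (forall k, 0 < omega k) -> (0 < n)%N ->
  density rho_a ->
  (forall P : opoly R N, poly_deg_le P n -> expect_finite rho_a (poly_op P)) ->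
  exists K : R, exists delta0 : R, 0 < delta0 /\
    forall delta : R, 0 < delta -> delta < delta0 ->
      exists e_delta e_0 : R[i],
        expect_is (with_LO_vacuum rho_a) (expo (quad_delta alpha omega delta) n) e_delta /\
        expect_is (with_LO_vacuum rho_a) (expo (quad alpha) n) e_0 /\
        `|e_delta - e_0| <= (K * delta ^+ 2)%:C.
Proof.
move=> _ omega_gt0 _ _ rho_finite.
set A := quad_poly alpha; set B := mix_poly omega.
have bideg_A : all (fun t => bideg 1 0 t.2) A.
  by apply: (big_rec (fun P => all (fun t => bideg 1 0 t.2) P)) => // k P _ hP.
have bideg_B : all (fun t => bideg 1 1 t.2) B.
  by apply: (big_rec (fun P => all (fun t => bideg 1 1 t.2) P)) => // k P _ hP.
set E := fun j => vsum (mixed_pow A B n j) (word_expect rho_a).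
have E1 : E 1%N = 0.
  rewrite /E -(vsum0 (mixed_pow A B n 1)); apply: eq_in_vsum => w /mapP [t tR ->].
  have /allP /(_ t tR) /andP [_ /eqP lo1] := bideg_mixed_pow bideg_A bideg_B n 1.
  by rewrite /word_expect lo_vacuum_elem_letter // mul0r.
have expect_homodyne X d : eqo X (jpoly_op (homodyne_poly omega alpha d)) ->
    expect_is (with_LO_vacuum rho_a) (expo X n) (\sum_(j < n.+1) d ^+ j * E j).
  move=> eX; rewrite -vsum_ppow_catZ.
  apply: (has_sum_ext _ (expect_jpoly rho_finite _)) => [x|]; first exact/esym/eq_diag_term/eqo_ppow.
  apply: sub_all (sig_size_ppow _ _) => [t /eqP -> //|].
  by rewrite all_cat all_map; apply/andP; split; [apply: sub_all bideg_A | apply: sub_all bideg_B];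
    move=> t /andP [].
exists (Re (\sum_(j < n.+1) `|E j|)), 1; split => // delta d_gt0 d_lt1.
exists (\sum_(j < n.+1) delta%:C ^+ j * E j), (\sum_(j < n.+1) 0 ^+ j * E j).
split; [exact/expect_homodyne/eqo_quad_delta | split; first exact/expect_homodyne/eqo_quad].
rewrite rmorphM rmorphXn /= RRe_real ?ger0_real ?sumr_ge0 // mulrC.
by apply: norm_power_sum_sub0_le => //; rewrite ler0c lecR !ltW.
Qed.
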